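(* Let $M\in\{2,3,\dots\}$, let $\mathcal{G}$ be the chain (vertex set $\mathbb{Z}$, $x\sim y$ iff $|x-y|=1$), and let $N=kM$ with $k\in\{2,3,\dots\}$. For $j\in\{1,\dots,M\}$ define $\mathfrak{m}_j:\mathbb{Z}\to\{0,\dots,M\}$ by $\mathfrak{m}_j(0)=j$, $\mathfrak{m}_j(x)=M$ for $x\in\{1,\dots,k-1\}$, $\mathfrak{m}_j(k)=M-j$, and $\mathfrak{m}_j(x)=0$ otherwise. Then the minimizers of $V_N$ over $\mathfrak{M}_N$ are, up to translations in $\mathbb{Z}$, exactly the configurations $\mathfrak{m}_1,\dots,\mathfrak{m}_M$, and $V_N(\mathfrak{m}_j)=M^2$ for every $j\in\{1,\dots,M\}$.
   Context: $\mathfrak{M}_N$ is the set of finitely supported functions $\mathfrak{m}:\mathbb{Z}\to\{0,1,\dots,M\}$ with $\sum_x\mathfrak{m}(x)=N$. The potential is $V_N(\mathfrak{m})=\sum_{x\in\mathbb{Z}}\big(\frac{M}{2}(\mathfrak{m}(x)+\mathfrak{m}(x+1))-\mathfrak{m}(x)\mathfrak{m}(x+1)\big)$. A translation of $\mathfrak{m}$ is $x\mapsto\mathfrak{m}(x-t)$ for some $t\in\mathbb{Z}$. *)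

From mathcomp Require Import all_boot all_order all_algebra.
From Stdlib Require Import ClassicalEpsilon.
Set Implicit Arguments. Unset Strict Implicit. Unset Printing Implicit Defensive.
Import Order.TTheory GRing.Theory Num.Theory.
Local Open Scope ring_scope.

Definition vanishes_outside (f : int -> rat) (n : nat) : Prop :=
  forall x : int, (n < `|x|)%N -> f x = 0.

(* Sum over Z of a finitely supported function: sum over a window [-n, n]
   outside of which f vanishes (n chosen by Hilbert's epsilon; the value does
   not depend on the choice of such a window). *)
Definition zsum (f : int -> rat) : rat :=
  let n := epsilon (inhabits 0%N) (vanishes_outside f) in
  \sum_(i < (n.*2).+1) f (i%:Z - n%:Z).

Definition inMN (M N : nat) (m : int -> nat) : Prop :=
  (exists n : nat, forall x : int, (n < `|x|)%N -> m x = 0%N) /\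
  (forall x : int, (m x <= M)%N) /\
  zsum (fun x => (m x)%:R) = N%:R.

Definition VN (M : nat) (m : int -> nat) : rat :=
  zsum (fun x => (M%:R / 2) * ((m x)%:R + (m (x + 1))%:R)
                 - (m x)%:R * (m (x + 1))%:R).

Definition isMinimizer (M N : nat) (m : int -> nat) : Prop :=
  inMN M N m /\ forall m' : int -> nat, inMN M N m' -> VN M m <= VN M m'.

Definition translate (m : int -> nat) (t : int) : int -> nat := fun x => m (x - t).

Definition mconf (M k j : nat) (x : int) : nat :=
  if x == 0 then j
  else if (0 < x) && (x < k%:Z) then M
  else if x == k%:Z then (M - j)%N
  else 0%N.

(* Since m has mass N, V_N(m) = M N - \sum_x m(x) m(x+1).  Let h = m(p) be the
   largest value of m.  Bounding m(x+1) by h left of p and m(x) by h from p on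
   gives \sum_x m(x) m(x+1) <= h (N - h) <= M (N - M), the last step because
   N >= 2M; hence V_N >= M^2.  In the case of equality h = M and all these
   bounds are tight, so every positive value left of p is followed by M and
   every positive value right of p is preceded by M: m is M strictly inside
   its support [q, r].  The mass constraint N = kM then forces r = q + k with
   m(q) + m(r) = M, or r = q + k - 1 with m(q) = m(r) = M; both are
   translates of some m_j. *)

From mathcomp Require Import all_boot all_order all_algebra zify ring.
From Stdlib Require Import ClassicalEpsilon FunctionalExtensionality.
Import Order.TTheory GRing.Theory Num.Theory.
Set Implicit Arguments. Unset Strict Implicit. Unset Printing Implicit Defensive.

Lemma eq_from_sum_eq (m n : nat) (F G : nat -> nat) :
  (forall i, m <= i < n -> F i <= G i) ->
  \sum_(m <= i < n) F i = \sum_(m <= i < n) G i ->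
  forall i, m <= i < n -> F i = G i.
Proof.
move=> leFG eqFG i /andP[mi iln].
have leFG_on a b : m <= a -> b <= n -> \sum_(a <= j < b) F j <= \sum_(a <= j < b) G j.
  move=> ma bn; rewrite big_nat_cond [X in _ <= X]big_nat_cond.
  by apply: leq_sum => j /andP[/andP[aj jb] _]; apply: leFG; lia.
have split_at H : \sum_(m <= j < n) H j
    = \sum_(m <= j < i) H j + H i + \sum_(i.+1 <= j < n) H j.
  by rewrite (big_cat_nat mi (ltnW iln)) /= (big_ltn iln) addnA.
move: eqFG; rewrite !split_at.
have := leFG_on m i (leqnn m) (ltnW iln); have := leFG_on i.+1 n (leqW mi) (leqnn n).
have := leFG i; rewrite mi iln; lia.
Qed.

Lemma sum_support (s : nat -> nat) (a b L : nat) :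
  (forall i, i < a -> s i = 0) -> (forall i, b < i -> s i = 0) -> a <= b < L ->
  \sum_(0 <= i < L) s i = \sum_(a <= i < b.+1) s i.
Proof.
move=> s_lt s_gt /andP[ab bL].
rewrite (big_cat_nat (leq0n a)) ?(leq_trans ab (ltnW bL)) //.
rewrite (big_cat_nat (_ : a <= b.+1) bL) ?(ltnW (leq_ltn_trans ab (ltnSn b))) //=.
rewrite big_nat_cond big1 ?add0n; last by move=> i /andP[/andP[_ ia] _]; apply: s_lt.
rewrite [X in _ + X = _]big_nat_cond [X in _ + X = _]big1 ?addn0 //.
by move=> i /andP[/andP[bi _] _]; apply: s_gt.
Qed.


Lemma sum_succ (s : nat -> nat) (L : nat) : s 0 = 0 -> s L = 0 ->
  \sum_(0 <= i < L) s i.+1 = \sum_(0 <= i < L) s i.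
Proof.
move=> s0 sL.
have : \sum_(0 <= i < L.+1) s i = s 0 + \sum_(0 <= i < L) s i.+1 by rewrite big_nat_recl.
by rewrite big_nat_recr //= s0 sL add0n addn0.
Qed.

Definition plateau (s : nat -> nat) (M q r : nat) : Prop :=
  [/\ forall i, i < q -> s i = 0, forall i, r < i -> s i = 0
    & forall i, q < i < r -> s i = M].

Lemma plateau_eq (s s' : nat -> nat) (M q r : nat) :
  plateau s M q r -> plateau s' M q r -> s q = s' q -> s r = s' r ->
  forall i, s i = s' i.
Proof.
move=> [s_lt s_gt s_mid] [s'_lt s'_gt s'_mid] eq_q eq_r i.
case: (ltngtP i q) => [iq | qi | -> //]; first by rewrite s_lt ?s'_lt.
case: (ltngtP i r) => [ir | ri | -> //]; last by rewrite s_gt ?s'_gt.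
by rewrite s_mid ?s'_mid ?qi.
Qed.

Lemma plateau_extend (s : nat -> nat) (M q r : nat) :
  plateau s M q r -> s r = M -> plateau s M q r.+1.
Proof.
move=> [s_lt s_gt s_mid] sr; split=> // i => [ri | /andP[qi]]; first by apply: s_gt; lia.
by rewrite ltnS leq_eqVlt => /orP[/eqP -> // | ir]; apply: s_mid; rewrite qi.
Qed.


Lemma plateau_mass (s : nat -> nat) (M q r L : nat) :
  plateau s M q r -> q < r < L ->
  \sum_(0 <= i < L) s i = s q + s r + (r - q.+1) * M.
Proof.
move=> [s_lt s_gt s_mid] /andP[qr rL].
rewrite (sum_support s_lt s_gt) ?(ltnW qr) //.
rewrite (big_ltn (ltnW qr : q < r.+1)) (big_nat_recr _ _ _ qr) /=.
rewrite (eq_big_nat _ _ (F2 := fun=> M)) ?sum_nat_const_nat; last by move=> i /s_mid.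
by rewrite addnAC addnA.
Qed.

Lemma plateau_adj (s : nat -> nat) (M q r L : nat) :
  plateau s M q r -> q.+1 < r < L ->
  \sum_(0 <= i < L) s i * s i.+1 = s q * M + (r - q.+2) * (M * M) + M * s r.
Proof.
case: r => // r [s_lt s_gt s_mid]; rewrite ltnS => /andP[qr rL].
rewrite (@sum_support _ q r); first last.
- by rewrite (ltnW qr) (ltnW rL).
- by move=> i ri; rewrite (s_gt i.+1) ?muln0.
- by move=> i iq; rewrite s_lt.
rewrite (big_ltn (ltnW qr : q < r.+1)) (big_nat_recr _ _ _ qr) /=.
rewrite (s_mid q.+1) ?(s_mid r) ?ltnSn ?qr //.
rewrite (eq_big_nat _ _ (F2 := fun=> M * M)) ?sum_nat_const_nat ?subSS ?addnA //.
by move=> i /andP[qi ir]; rewrite !s_mid //; lia.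
Qed.

Lemma propagate_eq (s : nat -> nat) (M q p : nat) : 0 < M -> 0 < s q ->
  (forall i, q <= i < p -> 0 < s i -> s i.+1 = M) ->
  forall i, q < i <= p -> s i = M.
Proof.
move=> M_gt0 sq step; elim=> // i IH /andP[qi ip]; apply: step; first lia.
case: (ltngtP q i) => [qi' | iq | <- //]; last lia.
by rewrite IH // qi' (ltnW ip).
Qed.

Section AdjacentProducts.

Variables (s : nat -> nat) (L : nat).
Hypothesis s_eq0 : forall i, L <= i -> s i = 0.

Local Notation mass := (\sum_(0 <= i < L) s i).
Local Notation adj := (\sum_(0 <= i < L) s i * s i.+1).

Lemma exists_max_index : exists2 p, p <= L & forall i, s i <= s p.
Proof.
case: (@arg_maxnP _ (ord0 : 'I_L.+1) xpredT (fun i => s i) isT) => p _ p_max.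
exists p; first by rewrite -ltnS.
move=> i; case: (leqP i L) => [iL | /ltnW/s_eq0 -> //].
exact: (p_max (Ordinal (iL : i < L.+1))).
Qed.

Lemma mass_split p : p <= L ->
  mass = \sum_(0 <= i < p) s i + s p + \sum_(p <= i < L) s i.+1.
Proof.
move=> pL; rewrite (big_cat_nat (leq0n p) pL) -addnA; congr (_ + _).
by rewrite -(big_nat_recl _ _ _ pL) (big_nat_recr _ _ _ pL) /= s_eq0 ?addn0.
Qed.

Section SplitAtIndex.

Variables (h p : nat).
Hypotheses (s_le : forall i, s i <= h) (pL : p <= L).

Lemma adj_split_le :
  \sum_(0 <= i < p) s i * s i.+1 <= \sum_(0 <= i < p) s i * h /\
  \sum_(p <= i < L) s i * s i.+1 <= \sum_(p <= i < L) h * s i.+1.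
Proof. by split; apply: leq_sum => i _; rewrite ?leq_mul2l ?leq_mul2r s_le orbT. Qed.

Lemma adj_split_mass :
  adj = \sum_(0 <= i < p) s i * s i.+1 + \sum_(p <= i < L) s i * s i.+1 /\
  h * mass = \sum_(0 <= i < p) s i * h + h * s p + \sum_(p <= i < L) h * s i.+1.
Proof.
split; first exact: big_cat_nat.
by rewrite (mass_split pL) !mulnDr -big_distrr -big_distrl mulnC.
Qed.

Lemma adj_le : adj + h * s p <= h * mass.
Proof. have [] := adj_split_le; have [] := adj_split_mass; lia. Qed.

Lemma adj_eq_tight : adj + h * s p = h * mass ->
  (forall i, i < p -> s i * s i.+1 = s i * h) /\
  (forall i, p <= i < L -> s i * s i.+1 = h * s i.+1).
Proof.
have [le_l le_r] := adj_split_le; have [-> ->] := adj_split_mass => eq_adj.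
have [eq_l eq_r] : \sum_(0 <= i < p) s i * s i.+1 = \sum_(0 <= i < p) s i * h /\
    \sum_(p <= i < L) s i * s i.+1 = \sum_(p <= i < L) h * s i.+1 by lia.
split=> [i ip | i iL].
- by apply: (eq_from_sum_eq _ eq_l) => // j _; rewrite leq_mul2l s_le orbT.
- by apply: (eq_from_sum_eq _ eq_r) => // j _; rewrite leq_mul2r s_le orbT.
Qed.

End SplitAtIndex.

Lemma adj_le_mass M : (forall i, s i <= M) -> 2 * M <= mass -> adj + M * M <= M * mass.
Proof.
move=> s_le mass_ge; have [p pL s_max] := exists_max_index.
(* with h := s p, (M - h) * (mass - M - h) >= 0 *)
have := adj_le s_max pL; have := s_le p; nia.
Qed.

Lemma max_of_adj_eq M : (forall i, s i <= M) -> 2 * M <= mass ->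
  adj + M * M = M * mass -> exists2 p, p <= L & s p = M.
Proof.
move=> s_le mass_ge adj_eq; have [p pL s_max] := exists_max_index.
exists p => //; have := adj_le s_max pL; have := s_le p; nia.
Qed.

Lemma plateau_of_adj_eq M : 0 < M -> (forall i, s i <= M) -> 2 * M <= mass ->
  adj + M * M = M * mass ->
  exists q r, [/\ q < r < L, plateau s M q r, 0 < s q & 0 < s r].
Proof.
move=> M_gt0 s_le mass_ge adj_eq.
have [p pL sp] := max_of_adj_eq s_le mass_ge adj_eq.
have := adj_eq_tight s_le pL; rewrite sp => /(_ adj_eq) [tight_l tight_r].
have step_up i : i < p -> 0 < s i -> s i.+1 = M.
  by move=> ip si; apply/eqP; rewrite -(eqn_pmul2l si) tight_l.
have step_down i : p <= i -> 0 < s i.+1 -> s i = M.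
  move=> pi si; case: (ltnP i L) => [iL | /leqW/s_eq0 s0]; last by rewrite s0 in si.
  by apply/eqP; rewrite -(eqn_pmul2r si) tight_r ?pi.
have sp_gt0 : 0 < s p by rewrite sp.
have [q sq q_min] := ex_minnP (ex_intro (fun i => 0 < s i) p sp_gt0).
have r_bound i : 0 < s i -> i <= L by case: (leqP i L) => // /ltnW/s_eq0 ->.
have [r sr r_max] := ex_maxnP (ex_intro (fun i => 0 < s i) p sp_gt0) r_bound.
have /andP[qp pr] : q <= p <= r by rewrite q_min ?r_max.
have mid_up : forall i, q < i <= p -> s i = M.
  by apply: propagate_eq => // i /andP[_ ip]; apply: step_up.
have mid_down i : p <= i < r -> s i = M.
  (* propagate_eq on s read backwards from r *)
  move=> /andP[pi ir].
  have step d : 0 <= d < r - p -> 0 < s (r - d) -> s (r - d.+1) = M.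
    move=> /andP[_ dp] sd; apply: step_down; first lia.
    by rewrite -subSn ?subSS //; lia.
  have := @propagate_eq (fun d => s (r - d)) M 0 (r - p) M_gt0 _ step (r - i).
  by rewrite subn0 subKn ?(ltnW ir) //; apply=> //; lia.
have s_lt i : i < q -> s i = 0 by case: (posnP (s i)) => // /q_min; lia.
have s_gt i : r < i -> s i = 0 by case: (posnP (s i)) => // /r_max; lia.
have rL : r < L by case: (ltnP r L) => // /s_eq0 s0; rewrite s0 in sr.
have qr : q < r.
  rewrite ltnNge; apply/negP => rq; have eq_q : q = p by lia.
  have eq_r : r = p by lia.
  subst q r; move: mass_ge.
  by rewrite (sum_support s_lt s_gt) ?rL ?leqnn // big_nat1 sp; lia.
exists q, r; split; rewrite ?qr ?rL //; split=> // i /andP[qi ir].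
by case: (leqP i p) => ip; [apply: mid_up | apply: mid_down]; lia.
Qed.

Lemma plateau_of_mass_eq M k q r : 0 < M -> (forall i, s i <= M) ->
  plateau s M q r -> q < r < L -> 0 < s q -> 0 < s r -> mass = k * M ->
  plateau s M q (q + k) /\ s (q + k) = M - s q.
Proof.
move=> M_gt0 s_le pl qrL sq sr; rewrite (plateau_mass pl qrL) => mass_eq.
have le_q := s_le q; have le_r := s_le r.
have [[eq_r ends] | [eq_r [eq_q eq_r_M]]] :
    (r = q + k /\ s q + s r = M) \/ (r.+1 = q + k /\ s q = M /\ s r = M).
  move: mass_eq; set w := r - q.+1 => mass_eq.
  have wk : w < k by rewrite -(ltn_pmul2r M_gt0); lia.
  have kw : k < w.+3 by rewrite -(ltn_pmul2r M_gt0) !mulSn; lia.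
  have [ek | ek] : k = w.+1 \/ k = w.+2 by lia.
  - by left; rewrite ek mulSn in mass_eq; lia.
  - by right; rewrite ek !mulSn in mass_eq; lia.
  by subst r; split=> //; lia.
rewrite -eq_r; split; first exact: plateau_extend.
by case: pl => _ s_gt _; rewrite s_gt ?eq_q ?subnn.
Qed.

End AdjacentProducts.


Local Open Scope ring_scope.

Lemma mconf_out (M k j : nat) (x : int) : (x < 0) || (k%:Z < x) -> mconf M k j x = 0%N.
Proof. by move=> x_out; rewrite /mconf !ifN //; lia. Qed.

Lemma mconf_k (M k j : nat) : (0 < k)%N -> mconf M k j k%:Z = (M - j)%N.
Proof. by move=> k_gt0; rewrite /mconf ifN ?eqxx; [rewrite ifN | ]; lia. Qed.

Lemma mconf_le (M k j : nat) (x : int) : (j <= M)%N -> (mconf M k j x <= M)%N.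
Proof. by move=> jM; rewrite /mconf; do 3?case: ifP => _; rewrite ?leq_subr. Qed.

Lemma mconf_plateau (M k j c : nat) :
  plateau (fun i => mconf M k j (i%:Z - c%:Z)) M c (c + k).
Proof.
split=> i i_range /=; try by apply: mconf_out; lia.
by rewrite /mconf ifN ?ifT //; lia.
Qed.

Lemma plateau_mconf (s : nat -> nat) (M k q : nat) : (0 < k)%N ->
  plateau s M q (q + k) -> s (q + k)%N = (M - s q)%N ->
  forall i, s i = mconf M k (s q) (i%:Z - q%:Z).
Proof.
move=> k_gt0 pl s_qk; apply: (plateau_eq pl (mconf_plateau _ _ _ _)) => /=.
  by rewrite subrr.
by rewrite s_qk PoszD addrAC subrr add0r mconf_k.
Qed.

Lemma mconf_sums (M k j : nat) : (2 <= k)%N -> (j <= M)%N ->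
  let s i := mconf M k j (i%:Z - 1%N%:Z) in
  (\sum_(0 <= i < k.+2) s i = k * M)%N /\
  (M * \sum_(0 <= i < k.+2) s i = \sum_(0 <= i < k.+2) s i * s i.+1 + M ^ 2)%N.
Proof.
move=> k_ge2 jM s; have pl := mconf_plateau M k j 1.
have s1 : mconf M k j (1%N%:Z - 1%N%:Z) = j by rewrite subrr.
have sk : mconf M k j ((1 + k)%N%:Z - 1%N%:Z) = (M - j)%N.
  by rewrite PoszD addrAC subrr add0r mconf_k //; lia.
have [range1 range2] : (1 < 1 + k < k.+2)%N /\ (2 < 1 + k < k.+2)%N by lia.
by rewrite (plateau_mass pl range1) (plateau_adj pl range2) s1 sk; split; nia.
Qed.

Lemma sum_window_sub (f : int -> rat) (a b : int) (L L' : nat) :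
  b <= a -> a + L%:Z <= b + L'%:Z -> (forall x, f x != 0 -> a <= x < a + L%:Z) ->
  \sum_(i < L') f (b + i%:Z) = \sum_(i < L) f (a + i%:Z).
Proof.
move=> ba aLb f_supp.
have f0 x : (x < a) || (a + L%:Z <= x) -> f x = 0.
  by move=> x_out; apply/eqP; apply: contraTT x_out => /f_supp; lia.
have [d a_eq] : exists d : nat, a = b + d%:Z by exists (absz (a - b)); lia.
subst a; have -> : L' = (d + L + (L' - d - L))%N by lia.
rewrite !big_split_ord /= big1 ?add0r => [|i _]; last first.
  by rewrite f0 //; have := ltn_ord i; lia.
rewrite [X in _ + X]big1 ?addr0 => [|i _]; last first.
  by rewrite f0 //; have := ltn_ord i; lia.
by apply: eq_bigr => i _; rewrite PoszD addrA.
Qed.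

Lemma zsum_window (f : int -> rat) (c : int) (L : nat) :
  (forall x, f x != 0 -> c <= x < c + L%:Z) ->
  zsum f = \sum_(0 <= i < L) f (c + i%:Z).
Proof.
move=> f_supp; rewrite /zsum big_mkord; set n := epsilon _ _.
have f_van : vanishes_outside f n.
  apply: (epsilon_spec (inhabits 0%N) (vanishes_outside f)).
  by exists (`|c| + L)%N => x x_out; apply/eqP; apply: contraTT x_out => /f_supp; lia.
pose B := (n + `|c| + L)%N.
transitivity (\sum_(i < B.*2.+1) f (- B%:Z + i%:Z)); last first.
  by rewrite (@sum_window_sub f c _ L) //; lia.
rewrite (@sum_window_sub f (- n%:Z) _ n.*2.+1); try lia.
  by apply: eq_bigr => i _; rewrite addrC.
move=> x fx; have : ~~ (n < `|x|)%N by apply: contra fx => /f_van ->.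
lia.
Qed.

Section Window.

Variables (M : nat) (m : int -> nat) (c : int) (L : nat).
Hypotheses (m_le : forall x, x <= c -> m x = 0%N)
           (m_ge : forall x, c + L%:Z <= x -> m x = 0%N).

Let m_out x : (x <= c) || (c + L%:Z <= x) -> m x = 0%N.
Proof. by case/orP; [apply: m_le | apply: m_ge]. Qed.

Lemma mass_window :
  zsum (fun x => (m x)%:R) = (\sum_(0 <= i < L) m (c + i%:Z))%:R.
Proof.
rewrite (@zsum_window _ c L) ?natr_sum // => x.
by apply: contraR => x_out; rewrite m_out //; lia.
Qed.

Lemma VN_window :
  VN M m = (M * \sum_(0 <= i < L) m (c + i%:Z))%:R
           - (\sum_(0 <= i < L) m (c + i%:Z) * m (c + i.+1%:Z))%:R.
Proof.
rewrite /VN (@zsum_window _ c L) => [|x]; last first.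
  by apply: contraR => x_out; rewrite !m_out ?mulr0 ?subrr //; lia.
have shift i : m (c + i%:Z + 1) = m (c + i.+1%:Z) by congr m; lia.
under [LHS]eq_bigr => i _ do rewrite shift.
rewrite sumrB -mulr_sumr big_split /= -!natr_sum.
rewrite (@sum_succ (fun i => m (c + i%:Z))); try by rewrite /= m_out //; lia.
rewrite natrM; congr (_ - _); first by field.
by rewrite natr_sum; apply: eq_bigr => i _; rewrite natrM.
Qed.

End Window.

Lemma finite_support_window (m : int -> nat) :
  (exists n : nat, forall x, (n < `|x|)%N -> m x = 0%N) ->
  exists (c : int) (L : nat),
    (forall x, x <= c -> m x = 0%N) /\ (forall x, c + L%:Z <= x -> m x = 0%N).
Proof.
by case=> n m_out; exists (- n.+1%:Z), n.*2.+2; split=> x x_out; apply: m_out; lia.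
Qed.

Section TranslatedBlock.

Variables (M k j : nat) (t : int).
Hypotheses (k_ge2 : (2 <= k)%N) (j_le : (j <= M)%N).

Let m := translate (mconf M k j) t.

Let m_le x : x <= t - 1 -> m x = 0%N.
Proof. by move=> x_le; apply: mconf_out; lia. Qed.

Let m_ge x : t - 1 + k.+2%:Z <= x -> m x = 0%N.
Proof. by move=> x_ge; apply: mconf_out; lia. Qed.

Let m_shift i : m (t - 1 + i%:Z) = mconf M k j (i%:Z - 1%N%:Z).
Proof. by rewrite /m /translate; congr mconf; lia. Qed.

Lemma inMN_translate_mconf : inMN M (k * M) m.
Proof.
have [mass _] := mconf_sums k_ge2 j_le.
split; first by exists (`|t| + k.+1)%N => x x_out; apply: mconf_out; lia.
split; first by move=> x; apply: mconf_le.
by rewrite (mass_window m_le m_ge); under eq_bigr => i _ do rewrite m_shift; rewrite mass.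
Qed.

Lemma VN_translate_mconf : VN M m = (M ^ 2)%:R.
Proof.
have [_ adj] := mconf_sums k_ge2 j_le.
rewrite (VN_window M m_le m_ge).
under eq_bigr => i _ do rewrite m_shift.
under [X in _ - X%:R]eq_bigr => i _ do rewrite !m_shift.
by rewrite adj natrD addrAC subrr add0r.
Qed.

End TranslatedBlock.

Section Configuration.

Variables (M N : nat) (m : int -> nat) (c : int) (L : nat).
Hypotheses (m_le : forall x, x <= c -> m x = 0%N)
           (m_ge : forall x, c + L%:Z <= x -> m x = 0%N)
           (m_bound : forall x, (m x <= M)%N)
           (m_mass : zsum (fun x => (m x)%:R) = N%:R)
           (N_ge : (2 * M <= N)%N).

Let s i := m (c + i%:Z).

Let s_eq0 i : (L <= i)%N -> s i = 0%N.
Proof. by move=> iL; apply: m_ge; lia. Qed.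

Let s_mass : (\sum_(0 <= i < L) s i)%N = N.
Proof. by apply/eqP; rewrite -(eqr_nat rat) -(mass_window m_le m_ge) m_mass. Qed.

Let s_le i : (s i <= M)%N := m_bound _.

Let s_mass_ge : (2 * M <= \sum_(0 <= i < L) s i)%N.
Proof. by rewrite s_mass. Qed.

Let VN_s : VN M m = (M * N)%:R - (\sum_(0 <= i < L) s i * s i.+1)%:R.
Proof. by rewrite (VN_window M m_le m_ge) -/s s_mass. Qed.

Lemma VN_ge_window : (M ^ 2)%:R <= VN M m.
Proof.
rewrite VN_s lerBrDr -natrD ler_nat.
by have := adj_le_mass s_eq0 s_le s_mass_ge; rewrite s_mass addnC.
Qed.

Lemma VN_le_window_shape (k : nat) : (0 < M)%N -> N = (k * M)%N ->
  VN M m <= (M ^ 2)%:R ->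
  exists2 j, (1 <= j <= M)%N & exists t, m = translate (mconf M k j) t.
Proof.
move=> M_gt0 N_eq VN_le.
have adj_eq : (\sum_(0 <= i < L) s i * s i.+1 + M * M = M * \sum_(0 <= i < L) s i)%N.
  apply/eqP; rewrite eqn_leq adj_le_mass //= s_mass.
  by move: VN_le; rewrite VN_s lerBlDr -natrD ler_nat expnS expn1 addnC.
have [q [r [qrL pl sq sr]]] := plateau_of_adj_eq s_eq0 M_gt0 s_le s_mass_ge adj_eq.
have k_gt0 : (0 < k)%N by case: k N_eq => // N0; move: N_ge; rewrite N0; lia.
have [pl_k s_qk] := plateau_of_mass_eq M_gt0 s_le pl qrL sq sr (etrans s_mass N_eq).
have s_eq := plateau_mconf k_gt0 pl_k s_qk.
have q_neq0 : q != 0%N by apply: contraTneq sq => ->; rewrite /s m_le //; lia.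
exists (s q); first by rewrite sq s_le.
exists (c + q%:Z); apply: functional_extensionality => x; rewrite /translate.
case: (lerP x c) => [xc | cx]; first by rewrite m_le ?mconf_out //; lia.
have -> : x = c + (absz (x - c))%:Z by lia.
by rewrite -/(s _) s_eq; congr mconf; lia.
Qed.

End Configuration.

Lemma VN_ge_sq (M N : nat) (m : int -> nat) :
  (2 * M <= N)%N -> inMN M N m -> (M ^ 2)%:R <= VN M m.
Proof.
move=> N_ge [/finite_support_window [c [L [m_le m_ge]]] [m_bound m_mass]].
exact: (VN_ge_window m_le m_ge m_bound m_mass N_ge).
Qed.

Lemma VN_le_sq_shape (M k : nat) (m : int -> nat) : (0 < M)%N -> (2 <= k)%N ->
  inMN M (k * M) m -> VN M m <= (M ^ 2)%:R ->
  exists2 j, (1 <= j <= M)%N & exists t, m = translate (mconf M k j) t.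
Proof.
move=> M_gt0 k_ge2 [/finite_support_window [c [L [m_le m_ge]]] [m_bound m_mass]].
have N_ge : (2 * M <= k * M)%N by rewrite leq_mul2r k_ge2 orbT.
exact: (VN_le_window_shape m_le m_ge m_bound m_mass N_ge M_gt0 erefl).
Qed.

Theorem mainTheorem6 (M k N : nat) (hM : (2 <= M)%N) (hk : (2 <= k)%N)
  (hN : N = (k * M)%N) :
  (forall m : int -> nat,
     isMinimizer M N m <->
     exists (j : nat) (t : int), (1 <= j <= M)%N /\ m = translate (mconf M k j) t) /\
  (forall j : nat, (1 <= j <= M)%N -> VN M (mconf M k j) = (M ^ 2)%:R).
Proof.
have N_ge : (2 * M <= N)%N by rewrite hN leq_mul2r hk orbT.
have translate_min j t : (j <= M)%N -> isMinimizer M N (translate (mconf M k j) t).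
  move=> j_le; split; first by rewrite hN; exact: inMN_translate_mconf.
  by move=> m' m'_in; rewrite VN_translate_mconf //; exact: VN_ge_sq m'_in.
split=> [m | j /andP[_ j_le]]; last first.
  have -> : mconf M k j = translate (mconf M k j) 0.
    by apply: functional_extensionality => x; rewrite /translate subr0.
  exact: VN_translate_mconf.
split=> [[m_in m_min] | [j [t [/andP[_ j_le] ->]]]]; last exact: translate_min.
have M_gt0 : (0 < M)%N by apply: ltnW.
have VN_le : VN M m <= (M ^ 2)%:R.
  rewrite -(VN_translate_mconf 0 hk M_gt0); apply: m_min.
  by rewrite hN; exact: inMN_translate_mconf.
rewrite hN in m_in; have [j j_range [t ->]] := VN_le_sq_shape M_gt0 hk m_in VN_le.
by exists j, t.
Qed.
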